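(* Let $W:\mathbb{R}\to[0,\infty]$ and constants $a,C_1,C_2>0$ be such that for all $t>0$, $B_W(at)\subset C_1t\,B_1^1+C_2\sqrt{t}\,B_2^1$. Then for every $n\ge1$ and all $t>0$, $B_{W_n}(at)\subset C_1t\,B_1^n+C_2\sqrt{t}\,B_2^n$, where $W_n(x)=\sum_{i=1}^n W(x_i)$ for $x\in\mathbb{R}^n$.
   Context: For $V:\mathbb{R}^m\to[0,\infty]$, $B_V(t)=\{x\in\mathbb{R}^m: V(x)\le t\}$. $B_p^n=\{x\in\mathbb{R}^n:(\sum_i|x_i|^p)^{1/p}\le1\}$ is the unit ball of $\ell_p^n$; $+$ is Minkowski sum and $sB$ is the dilate of $B$ by $s$. *)

From mathcomp Require Import all_boot all_order all_algebra.
From mathcomp Require Import all_classical all_reals.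
Set Implicit Arguments. Unset Strict Implicit. Unset Printing Implicit Defensive.
Import Order.TTheory GRing.Theory Num.Theory.
Local Open Scope ring_scope.
Local Open Scope classical_set_scope.

Definition sublevel (R : realType) (T : Type) (V : T -> \bar R) (t : R) : set T :=
  [set x | (V x <= t%:E)%E].

Definition ball_l1 (R : realType) (n : nat) : set ('I_n -> R) :=
  [set x | \sum_(i < n) `|x i| <= 1].

Definition ball_l2 (R : realType) (n : nat) : set ('I_n -> R) :=
  [set x | Num.sqrt (\sum_(i < n) x i ^+ 2) <= 1].

Definition dilate (R : realType) (n : nat) (s : R) (B : set ('I_n -> R)) :
  set ('I_n -> R) := [set x | exists2 u, B u & x = (fun i => s * u i)].

Definition msum (R : realType) (n : nat) (A B : set ('I_n -> R)) :
  set ('I_n -> R) := [set x | exists y z, A y /\ B z /\ x = (fun i => y i + z i)].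

Definition tensW (R : realType) (n : nat) (W : R -> \bar R) (x : 'I_n -> R) : \bar R :=
  (\sum_(i < n) W (x i))%E.

From mathcomp Require Import all_boot all_order all_algebra.
From mathcomp Require Import all_classical all_reals.
From mathcomp Require Import lra.
Set Implicit Arguments. Unset Strict Implicit. Unset Printing Implicit Defensive.
Import Order.TTheory GRing.Theory Num.Theory.
Local Open Scope ring_scope.
Local Open Scope classical_set_scope.

(* If W_n(x) <= a t, the levels s_i = W(x_i)/a add up to at most t.  The
   one-dimensional hypothesis at level s_i splits x_i = p_i + q_i with
   |p_i| <= C1 s_i and q_i^2 <= C2^2 s_i, and summing these bounds over i puts
   p in C1 t B_1^n and q in C2 sqrt(t) B_2^n.  A coordinate with W(x_i) = 0
   lies in C1 s B_1^1 + C2 sqrt(s) B_2^1 for every s > 0, hence vanishes. *)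

Section Balls.
Variables (R : realType) (n : nat).

Lemma dilate_ball_l1P (s : R) (u : 'I_n -> R) :
  0 < s -> dilate s (@ball_l1 R n) u <-> \sum_i `|u i| <= s.
Proof.
move=> s_gt0; rewrite /dilate /ball_l1 /=; split.
- move=> [v v_l1 ->]; under eq_bigr do rewrite normrM (gtr0_norm s_gt0).
  by rewrite -mulr_sumr ler_piMr // ltW.
- move=> u_l1; exists (fun i => u i / s); last first.
    by apply/funext => i; rewrite mulrC divfK ?gt_eqF.
  have inv_s_gt0 : 0 < s^-1 by rewrite invr_gt0.
  under eq_bigr do rewrite normrM (gtr0_norm inv_s_gt0).
  by rewrite -mulr_suml ler_pdivrMr // mul1r.
Qed.

Lemma dilate_ball_l2P (s : R) (u : 'I_n -> R) :
  0 < s -> dilate s (@ball_l2 R n) u <-> \sum_i u i ^+ 2 <= s ^+ 2.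
Proof.
move=> s_gt0; rewrite /dilate /ball_l2 /=.
have sqrt_sum_le1 (v : 'I_n -> R) :
    (Num.sqrt (\sum_i v i ^+ 2) <= 1) = (\sum_i v i ^+ 2 <= 1).
  by rewrite -[_ <= 1 in RHS]ler_sqrt ?sqrtr1.
split.
- move=> [v + ->]; rewrite sqrt_sum_le1 => v_l2.
  under eq_bigr do rewrite exprMn.
  by rewrite -mulr_sumr ler_piMr // sqr_ge0.
- move=> u_l2; exists (fun i => u i / s); last first.
    by apply/funext => i; rewrite mulrC divfK ?gt_eqF.
  rewrite sqrt_sum_le1; under eq_bigr do rewrite expr_div_n.
  by rewrite -mulr_suml ler_pdivrMr ?exprn_gt0 // mul1r.
Qed.

End Balls.

Lemma sume_le_EFin (R : realType) (I : finType) (f : I -> \bar R) (c : R) :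
  (forall i, 0 <= f i)%E -> (\sum_i f i <= c%:E)%E ->
  exists2 g : I -> R, (forall i, f i = (g i)%:E) & \sum_i g i <= c.
Proof.
move=> f_ge0 sum_le.
have sum_fin : \sum_i f i \is a fin_num.
  by rewrite ge0_fin_numE ?sume_ge0 // (le_lt_trans sum_le) ?ltry.
have f_fin i : f i \is a fin_num.
  by move/sum_fin_numP : sum_fin; apply; rewrite ?mem_index_enum.
exists (fun i => fine (f i)) => [i|]; first by rewrite fineK.
by rewrite -lee_fin -sumEFin (eq_bigr _ (fun i _ => fineK (f_fin i))).
Qed.

(* [x] lies in [C1 s B_1^1 + C2 sqrt(s) B_2^1]; the l2 bound is squared so
   that it adds up over coordinates. *)
Definition l1l2_split (R : realFieldType) (C1 C2 s x : R) :=
  exists p q, x = p + q /\ `|p| <= C1 * s /\ q ^+ 2 <= C2 ^+ 2 * s.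

Lemma l1l2_split_vanish (R : realFieldType) (C1 C2 x : R) :
  0 <= C1 -> 0 <= C2 -> (forall s, 0 < s -> l1l2_split C1 C2 s x) -> x = 0.
Proof.
move=> C1_ge0 C2_ge0 split_x.
have norm_le r : 0 < r -> r <= 1 -> `|x| <= (C1 + C2) * r.
  move=> r_gt0 r_le1.
  have [p [q [-> [p_le q_le]]]] := split_x _ (exprn_gt0 2 r_gt0).
  have q_le' : `|q| <= C2 * r.
    have C2r_ge0 : 0 <= C2 * r by rewrite mulr_ge0 // ltW.
    by rewrite ler_norml; apply/andP; split; nra.
  have rr_le : C1 * r ^+ 2 <= C1 * r by rewrite ler_wpM2l // expr2 ler_piMl // ltW.
  have := ler_normD p q; lra.
apply/normr0_eq0/le_anti; rewrite normr_ge0 andbT.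
apply/ler_addgt0Pr => e e_gt0; rewrite add0r.
have D_gt0 : 0 < C1 + C2 + e by lra.
apply: le_trans (norm_le (e / (C1 + C2 + e)) _ _) _.
- by rewrite divr_gt0.
- by rewrite ler_pdivrMr // mul1r; lra.
- by rewrite mulrA ler_pdivrMr //; nra.
Qed.

Section Splitting.
Variables (R : realType) (C1 C2 : R).
Hypotheses (C1_gt0 : 0 < C1) (C2_gt0 : 0 < C2).

Lemma msum_dilate_balls1_split (s x : R) : 0 < s ->
  msum (dilate (C1 * s) (@ball_l1 R 1)) (dilate (C2 * Num.sqrt s) (@ball_l2 R 1))
    (fun _ => x) ->
  l1l2_split C1 C2 s x.
Proof.
move=> s_gt0 [y [z [y_l1 [z_l2 xE]]]]; exists (y ord0), (z ord0).
split; first exact: (congr1 (fun f => f ord0) xE).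
have C1s_gt0 : 0 < C1 * s by rewrite mulr_gt0.
have C2s_gt0 : 0 < C2 * Num.sqrt s by rewrite mulr_gt0 ?sqrtr_gt0.
move: y_l1 z_l2; rewrite dilate_ball_l1P // dilate_ball_l2P //.
by rewrite !big_ord1 exprMn sqr_sqrtr // ltW.
Qed.

Lemma msum_dilate_balls_of_split n (t : R) (s x : 'I_n -> R) : 0 < t ->
  \sum_i s i <= t -> (forall i, l1l2_split C1 C2 (s i) (x i)) ->
  msum (dilate (C1 * t) (@ball_l1 R n)) (dilate (C2 * Num.sqrt t) (@ball_l2 R n)) x.
Proof.
move=> t_gt0 sum_s split_x.
have C1t_gt0 : 0 < C1 * t by rewrite mulr_gt0.
have C2t_gt0 : 0 < C2 * Num.sqrt t by rewrite mulr_gt0 ?sqrtr_gt0.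
have /choice [pq pqP] : forall i, exists pq : R * R, x i = pq.1 + pq.2
    /\ `|pq.1| <= C1 * s i /\ pq.2 ^+ 2 <= C2 ^+ 2 * s i.
  by move=> i; have [p [q pqP]] := split_x i; exists (p, q).
exists (fun i => (pq i).1), (fun i => (pq i).2); split; [|split].
- rewrite dilate_ball_l1P //.
  apply: le_trans (ler_sum _ (fun i _ => (pqP i).2.1)) _.
  by rewrite -mulr_sumr ler_wpM2l // ltW.
- rewrite dilate_ball_l2P //.
  apply: le_trans (ler_sum _ (fun i _ => (pqP i).2.2)) _.
  by rewrite -mulr_sumr exprMn sqr_sqrtr ?ler_wpM2l ?sqr_ge0 // ltW.
- by apply/funext => i; case: (pqP i).
Qed.

End Splitting.

Section Tensorization.
Variables (R : realType) (W : R -> \bar R) (a C1 C2 : R).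
Hypotheses (a_gt0 : 0 < a) (C1_gt0 : 0 < C1) (C2_gt0 : 0 < C2).
Hypothesis sublevelW_sub : forall t : R, 0 < t ->
  (fun x : R => (fun _ : 'I_1 => x)) @` sublevel W (a * t)
    `<=` msum (dilate (C1 * t) (@ball_l1 R 1)) (dilate (C2 * Num.sqrt t) (@ball_l2 R 1)).

Lemma sublevelW_split (s x : R) :
  0 <= s -> (W x <= (a * s)%:E)%E -> l1l2_split C1 C2 s x.
Proof.
have pos_split u y : 0 < u -> (W y <= (a * u)%:E)%E -> l1l2_split C1 C2 u y.
  move=> u_gt0 Wy; apply: msum_dilate_balls1_split => //.
  by apply: sublevelW_sub => //; exists y.
rewrite le_eqVlt => /predU1P[<- Wx | s_gt0 Wx]; last exact: pos_split.
have -> : x = 0.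
  apply: (l1l2_split_vanish (ltW C1_gt0) (ltW C2_gt0)) => u u_gt0.
  by apply: pos_split => //; apply: le_trans Wx _; rewrite mulr0 lee_fin mulr_ge0 // ltW.
by exists 0, 0; rewrite addr0 normr0 expr0n /= !mulr0.
Qed.

End Tensorization.

Theorem lemma7 (R : realType) (W : R -> \bar R) (a C1 C2 : R) :
  (forall x, (0 <= W x)%E) ->
  0 < a -> 0 < C1 -> 0 < C2 ->
  (forall t : R, 0 < t ->
     (fun x : R => (fun _ : 'I_1 => x)) @` sublevel W (a * t)
       `<=` msum (dilate (C1 * t) (@ball_l1 R 1))
                 (dilate (C2 * Num.sqrt t) (@ball_l2 R 1))) ->
  forall (n : nat), (0 < n)%N ->
  forall t : R, 0 < t ->
    sublevel (tensW W) (a * t)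
      `<=` msum (dilate (C1 * t) (@ball_l1 R n))
                (dilate (C2 * Num.sqrt t) (@ball_l2 R n)).
Proof.
move=> W_ge0 a_gt0 C1_gt0 C2_gt0 sublevelW_sub n _ t t_gt0 x.
rewrite /sublevel /tensW /= => Wn_le.
have [w Wxw sum_w] := sume_le_EFin (fun i => W_ge0 (x i)) Wn_le.
apply: (msum_dilate_balls_of_split C1_gt0 C2_gt0 (s := fun i => w i / a)) => //.
  by rewrite -mulr_suml ler_pdivrMr // mulrC.
move=> i; apply: (sublevelW_split a_gt0 C1_gt0 C2_gt0 sublevelW_sub).
  by rewrite divr_ge0 -?lee_fin -?Wxw // ltW.
by rewrite mulrC divfK ?gt_eqF // Wxw.
Qed.
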